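(* Let $\mathcal{A}\subset\mathbb{R}^n$ be a nonempty compact set, $\Xi\subseteq\mathbb{R}^n$, $V:\mathbb{R}^n\to\mathbb{R}_+$ and $\Psi:\mathbb{R}^n\rightrightarrows\mathbb{R}^n$, and assume one of the following two settings holds: (i) $\Xi$ is nonempty, closed and convex, $\mathcal{A}$ is convex, and $V(y)=\tfrac12\|y-\mathbf{P}_{\mathcal{A}}(y)\|^2$; (ii) $\Xi=\mathbb{R}^n$ and $V$ is continuously differentiable with locally Lipschitz gradient, positive definite and radially unbounded with respect to $\mathcal{A}$. Assume $\Psi$ is SPSP with respect to $V$ on $\Xi$, that for every $y\in\Xi$, $\Psi(y)$ is a singleton $\{s(y)\}$, and that for every $\sigma>0$ there exists $L>0$ such that $\|s(y_1)-s(y_2)\|\le L\|y_1-y_2\|$ for all $y_1,y_2\in\Xi\cap\bar B_\sigma(\mathcal{A})$. Then $\mathcal{A}$ is SPAS for the iterative method $y^+=\mathbf{P}_\Xi[y-\alpha s(y)]$ with parameter $\alpha>0$.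
   Context: $\|\cdot\|$ is Euclidean; $\mathbf{P}_S$ is the orthogonal projection onto a nonempty closed convex set $S$. For compact $S$ and $r>0$: $\bar B_r(S)=\{x:\|x-\mathbf{P}_S(x)\|\le r\}$, $B_r(S)=\{x:\|x-\mathbf{P}_S(x)\|<r\}$ (distance to $S$). A function $V$ is positive definite w.r.t. a closed set $S$ if $V=0$ on $S$ and $V>0$ off $S$; it is radially unbounded w.r.t. $S$ (on a set $\Xi$) if for every $B\in\mathbb{R}$ there is $r>0$ with $V(x)>B$ for all $x$ (in $\Xi$) outside $\bar B_r(S)$. SPSP: Let $V:\mathbb{R}^n\to\mathbb{R}_+$ be differentiable, positive definite and radially unbounded w.r.t. compact $\mathcal{A}$, and let $\Xi$ strictly contain $\mathcal{A}$ (every point of $\mathcal{A}$ has an open ball around it contained in $\Xi$). $\Psi$ is semiglobally, practically, strictly pseudogradient (SPSP) w.r.t. $V$ on $\Xi$ if there exist $\epsilon\ge0$, $b\ge0$ such that $\nabla V(y)^Ts\ge -b$ for all $y\in\Xi\cap\bar B_\epsilon(\mathcal{A})$, $s\in\Psi(y)$, and for every $\sigma>\epsilon$ there is a continuous $\phi_{\sigma,\epsilon}:\mathbb{R}^n\to\mathbb{R}$, positive on $\Xi\cap(\bar B_\sigma(\mathcal{A})\setminus B_\epsilon(\mathcal{A}))$ and radially unbounded w.r.t. $\mathcal{A}$ on $\Xi$, with $\nabla V(y)^Ts\ge\phi_{\sigma,\epsilon}(y)$ for all $y\in\Xi\cap(\bar B_\sigma(\mathcal{A})\setminus B_\epsilon(\mathcal{A}))$,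 $s\in\Psi(y)$. SPAS (for the iteration with parameter $\alpha$; statements below concern every sequence $(y(t))_{t\in\mathbb{N}}$ with $y(0)\in\Xi$, $y(t+1)=\mathbf{P}_\Xi[y(t)-\alpha s(y(t))]$): $\mathcal{A}$ is practically stable if for some $\check\rho_s>0$ and every $\rho_s>\check\rho_s$ there exist $\delta>0$ and a nonempty set $P_s\subset(0,\infty)$ such that whenever $\alpha\in P_s$ and $y(0)\in\bar B_\delta(\mathcal{A})\cap\Xi$, $y(t)\in\bar B_{\rho_s}(\mathcal{A})\cap\Xi$ for all $t$. A compact $S$ is uniformly attractive on compact $\Omega$ if for every $\varepsilon>0$ with $\bar B_\varepsilon(S)\cap\Xi\subset\Omega\cap\Xi$ there is $T\in\mathbb{N}$ such that $y(t)\in\bar B_\varepsilon(S)$ whenever $y(0)\in\Omega$ and $t\ge T$. $\mathcal{A}$ is semiglobally practically attractive if for some $\check\rho_a>0$ and all $\sigma>\rho_a>\check\rho_a$ there is a nonempty $P_a\subset(0,\infty)$ such that whenever $\alpha\in P_a$, $\bar B_{\rho_a}(\mathcal{A})$ is uniformly attractive on $\bar B_\sigma(\mathcal{A})$. $\mathcal{A}$ is SPAS (semiglobally practically asymptotically stable) if it is practically stable and semiglobally practically attractive. *)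

From HB Require Import structures.
From mathcomp Require Import all_boot all_order all_algebra.
From mathcomp Require Import all_classical all_reals all_analysis.
Set Implicit Arguments. Unset Strict Implicit. Unset Printing Implicit Defensive.
Import Order.TTheory GRing.Theory Num.Theory.
Import numFieldNormedType.Exports.
Local Open Scope classical_set_scope.
Local Open Scope ring_scope.

Section Defs.
Variables (R : realType) (n : nat).
Local Notation vec := 'rV[R]_n.

Definition dotv (x y : vec) : R := \sum_(i < n) x ord0 i * y ord0 i.
Definition enorm (x : vec) : R := Num.sqrt (dotv x x).

(* P_S(x): a Euclidean nearest point of S to x (unique when S is nonempty
   closed convex; exists for S nonempty compact).  Default x otherwise. *)
Definition projS (S : set vec) (x : vec) : vec :=
  xget x [set p | S p /\ forall q, S q -> enorm (x - p) <= enorm (x - q)].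

Definition dist (S : set vec) (x : vec) : R := enorm (x - projS S x).

Definition cball (r : R) (S : set vec) : set vec := [set x | dist S x <= r].
Definition oball (r : R) (S : set vec) : set vec := [set x | dist S x < r].

Definition grad (V : vec -> R) (y : vec) : vec :=
  \row_(i < n) ('D_(delta_mx ord0 i) V y).

Definition pos_def (S : set vec) (V : vec -> R) : Prop :=
  (forall x, S x -> V x = 0) /\ (forall x, ~ S x -> 0 < V x).

Definition rad_unb_on (S Xi : set vec) (V : vec -> R) : Prop :=
  forall B : R, exists r : R, 0 < r /\
    forall x, Xi x -> ~ cball r S x -> B < V x.

Definition rad_unb (S : set vec) (V : vec -> R) : Prop := rad_unb_on S setT V.

Definition strictly_contains (Xi A : set vec) : Prop :=
  forall a, A a -> exists r : R, 0 < r /\ forall x, enorm (x - a) < r -> Xi x.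

Definition SPSP (A Xi : set vec) (V : vec -> R) (Psi : vec -> set vec) : Prop :=
  strictly_contains Xi A /\
  exists eps b : R, 0 <= eps /\ 0 <= b /\
    (forall y sv, Xi y -> cball eps A y -> Psi y sv -> - b <= dotv (grad V y) sv) /\
    (forall sigma : R, eps < sigma ->
       exists phi : vec -> R, continuous phi /\
         (forall y, Xi y -> cball sigma A y -> ~ oball eps A y -> 0 < phi y) /\
         rad_unb_on A Xi phi /\
         (forall y sv, Xi y -> cball sigma A y -> ~ oball eps A y -> Psi y sv ->
            phi y <= dotv (grad V y) sv)).

Definition trajectory (Xi : set vec) (s : vec -> vec) (alpha : R) (y : nat -> vec) : Prop :=
  Xi (y 0%N) /\ forall t, y t.+1 = projS Xi (y t - alpha *: s (y t)).

Definition practically_stable (A Xi : set vec) (s : vec -> vec) : Prop :=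
  exists rho_chk : R, 0 < rho_chk /\
    forall rho_s : R, rho_chk < rho_s ->
      exists delta : R, 0 < delta /\
      exists Ps : set R, Ps !=set0 /\ (forall a, Ps a -> 0 < a) /\
        forall alpha y, Ps alpha -> trajectory Xi s alpha y ->
          cball delta A (y 0%N) -> forall t, cball rho_s A (y t) /\ Xi (y t).

Definition unif_attractive (Xi : set vec) (s : vec -> vec) (alpha : R)
    (S Omega : set vec) : Prop :=
  forall eps : R, 0 < eps -> cball eps S `&` Xi `<=` Omega `&` Xi ->
    exists T : nat, forall y, trajectory Xi s alpha y -> Omega (y 0%N) ->
      forall t, (T <= t)%N -> cball eps S (y t).

Definition semiglobally_practically_attractive (A Xi : set vec) (s : vec -> vec) : Prop :=
  exists rho_chk : R, 0 < rho_chk /\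
    forall sigma rho_a : R, rho_chk < rho_a -> rho_a < sigma ->
      exists Pa : set R, Pa !=set0 /\ (forall a, Pa a -> 0 < a) /\
        forall alpha, Pa alpha ->
          unif_attractive Xi s alpha (cball rho_a A) (cball sigma A).

Definition SPAS (A Xi : set vec) (s : vec -> vec) : Prop :=
  practically_stable A Xi s /\ semiglobally_practically_attractive A Xi s.

Definition C1_loc_lip_grad (V : vec -> R) : Prop :=
  (forall y, differentiable V y) /\ continuous (grad V) /\
  (forall y, exists r L : R, 0 < r /\ 0 < L /\
     forall z1 z2, enorm (z1 - y) < r -> enorm (z2 - y) < r ->
       enorm (grad V z1 - grad V z2) <= L * enorm (z1 - z2)).

End Defs.

From HB Require Import structures.
From mathcomp Require Import all_boot all_order all_algebra.
From mathcomp Require Import all_classical all_reals all_analysis.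
From mathcomp Require Import ring lra.

(* Both settings reduce to one descent estimate: for small alpha the projected step
   satisfies V(y+) <= V(y) - alpha grad V(y).s(y) + alpha eta, uniformly near A.  In
   setting (i) this comes from the second-order expansion of 1/2 dist(., A)^2, whose
   gradient is y - P_A y, and from the fact that P_Xi does not increase the distance to
   A, which lies in Xi; in setting (ii) from the mean value theorem and the uniform
   continuity of grad V on compact sets.  SPSP gives grad V.s >= phi > 0 away from the
   eps-neighbourhood of A, and phi has a positive minimum m on the compact part of the
   region where V exceeds the bound Q of V near A.  So for a fixed small step V drops by
   alpha m / 2 per step until it falls below Q + 1, and afterwards stays below Q + 2;
   radial unboundedness turns these sublevel sets of V into neighbourhoods of A. *)

Set Implicit Arguments. Unset Strict Implicit. Unset Printing Implicit Defensive.
Import Order.TTheory GRing.Theory Num.Theory.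
Import numFieldNormedType.Exports.
Local Open Scope classical_set_scope.
Local Open Scope ring_scope.

Section Euclid.
Variables (R : realType) (n : nat).
Local Notation vec := 'rV[R]_n.
Implicit Types x y z : vec.

Lemma dotvC x y : dotv x y = dotv y x.
Proof. by apply: eq_bigr => i _; rewrite mulrC. Qed.

Lemma dotvDl x y z : dotv (x + y) z = dotv x z + dotv y z.
Proof. by rewrite /dotv -big_split; apply: eq_bigr => i _; rewrite !mxE mulrDl. Qed.

Lemma dotvDr x y z : dotv z (x + y) = dotv z x + dotv z y.
Proof. by rewrite dotvC dotvDl !(dotvC z). Qed.

Lemma dotvZl a x y : dotv (a *: x) y = a * dotv x y.
Proof. by rewrite /dotv mulr_sumr; apply: eq_bigr => i _; rewrite !mxE mulrA. Qed.

Lemma dotvZr a x y : dotv y (a *: x) = a * dotv y x.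
Proof. by rewrite dotvC dotvZl dotvC. Qed.

Lemma dotvNl x y : dotv (- x) y = - dotv x y.
Proof. by rewrite -scaleN1r dotvZl mulN1r. Qed.

Lemma dotvNr x y : dotv y (- x) = - dotv y x.
Proof. by rewrite dotvC dotvNl dotvC. Qed.

Lemma dotvBl x y z : dotv (x - y) z = dotv x z - dotv y z.
Proof. by rewrite dotvDl dotvNl. Qed.

Lemma dotvBr x y z : dotv z (x - y) = dotv z x - dotv z y.
Proof. by rewrite dotvDr dotvNr. Qed.

Lemma dotv0l x : dotv 0 x = 0.
Proof. by rewrite /dotv big1 // => i _; rewrite mxE mul0r. Qed.

Lemma dotv0r x : dotv x 0 = 0.
Proof. by rewrite dotvC dotv0l. Qed.

Lemma dotv_ge0 x : 0 <= dotv x x.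
Proof. by apply: sumr_ge0 => i _; rewrite -expr2 sqr_ge0. Qed.

Lemma dotv_eq0 x : dotv x x = 0 -> x = 0.
Proof.
move=> /eqP; rewrite psumr_eq0; last by move=> i _; rewrite -expr2 sqr_ge0.
move=> /allP x0; apply/rowP => i; rewrite mxE.
by have := x0 i (mem_index_enum i); rewrite -expr2 sqrf_eq0 => /eqP.
Qed.

Lemma dotv_delta x i : dotv x (delta_mx ord0 i) = x ord0 i.
Proof.
rewrite /dotv (bigD1 i) //= big1 ?addr0; first by rewrite mxE !eqxx mulr1.
by move=> j ji; rewrite mxE (negbTE ji) andbF mulr0.
Qed.

Lemma sqr_coord_le_dotv x i : x ord0 i ^+ 2 <= dotv x x.
Proof.
rewrite /dotv (bigD1 i) //= -expr2 lerDl.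
by apply: sumr_ge0 => j _; rewrite -expr2 sqr_ge0.
Qed.

Lemma norm_coord_le x i : `|x ord0 i| <= `|x|.
Proof.
rewrite [`|x|]mx_normrE.
exact: (le_bigmax _ (fun ij : 'I_1 * 'I_n => `|x ij.1 ij.2|) (ord0, i)).
Qed.

Lemma norm_dotv_le x y : `|dotv x y| <= n%:R * (`|x| * `|y|).
Proof.
rewrite /dotv; apply: le_trans (ler_norm_sum _ _ _) _.
have -> : n%:R * (`|x| * `|y|) = \sum_(i < n) `|x| * `|y|.
  by rewrite sumr_const card_ord mulr_natl.
by apply: ler_sum => i _; rewrite normrM ler_pM ?norm_coord_le.
Qed.

Lemma enorm_ge0 x : 0 <= enorm x.
Proof. exact: sqrtr_ge0. Qed.

Lemma enorm_sqr x : enorm x ^+ 2 = dotv x x.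
Proof. by rewrite sqr_sqrtr // dotv_ge0. Qed.

Lemma enorm0 : enorm (0 : vec) = 0.
Proof. by rewrite /enorm dotv0l sqrtr0. Qed.

Lemma enorm_eq0 x : enorm x = 0 -> x = 0.
Proof. by move=> x0; apply: dotv_eq0; rewrite -enorm_sqr x0 expr0n. Qed.

Lemma enormB x y : enorm (x - y) = enorm (y - x).
Proof. by rewrite /enorm -opprB dotvNl dotvNr opprK. Qed.

Lemma dotv_le_enorm x y : dotv x y <= enorm x * enorm y.
Proof.
have [->|y0] := eqVneq y 0; first by rewrite dotv0r enorm0 mulr0.
have yy0 : 0 < dotv y y.
  by rewrite lt_neqAle dotv_ge0 andbT eq_sym; apply: contra_neq y0 => /dotv_eq0.
have sqr_le : dotv x y ^+ 2 <= dotv x x * dotv y y.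
  set t := dotv x y / dotv y y.
  have := dotv_ge0 (x - t *: y).
  rewrite dotvBl !dotvBr !dotvZl !dotvZr (dotvC y x).
  have -> : dotv x x - t * dotv x y - (t * dotv x y - t * (t * dotv y y))
       = dotv x x - dotv x y ^+ 2 / dotv y y by rewrite /t; field; rewrite gt_eqF.
  by rewrite subr_ge0 ler_pdivrMr.
rewrite -(ger0_norm (enorm_ge0 x)) -(ger0_norm (enorm_ge0 y)) -normrM.
apply: le_trans (ler_norm _) _.
rewrite -ler_sqr ?nnegrE ?normr_ge0 // !real_normK ?num_real //.
by rewrite exprMn !enorm_sqr.
Qed.

Lemma enormD x y : enorm (x + y) <= enorm x + enorm y.
Proof.
rewrite -ler_sqr ?nnegrE ?addr_ge0 ?enorm_ge0 //.
rewrite enorm_sqr dotvDl !dotvDr sqrrD !enorm_sqr (dotvC y x).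
have := dotv_le_enorm x y; lra.
Qed.

Lemma normr_le_enorm x : `|x| <= enorm x.
Proof.
rewrite [`|x|]mx_normrE; apply: bigmax_le => [|[i j] _]; first exact: enorm_ge0.
rewrite (ord1 i) -(sqrtr_sqr (x ord0 j)); apply: ler_wsqrtr.
exact: sqr_coord_le_dotv.
Qed.

Lemma enorm_le_normr x : enorm x <= n%:R * `|x|.
Proof.
rewrite -ler_sqr ?nnegrE ?mulr_ge0 ?enorm_ge0 // enorm_sqr.
apply: (@le_trans _ _ (\sum_(i < n) `|x| ^+ 2)).
  apply: ler_sum => i _; rewrite -expr2 -real_normK ?num_real //.
  by rewrite lerXn2r ?nnegrE ?normr_ge0 // norm_coord_le.
rewrite sumr_const card_ord exprMn -[_ *+ n]mulr_natl ler_wpM2r ?sqr_ge0 //.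
have : (n <= n * n)%N by case: (n) => // m; rewrite leq_pmulr.
by rewrite expr2 -natrM ler_nat.
Qed.

Lemma lipschitz_continuous (f : vec -> R) (C : R) :
  (forall x y, `|f x - f y| <= C * enorm (x - y)) -> continuous f.
Proof.
move=> f_lip x; apply/(@cvgrPdist_lt _ _ _ (nbhs x) (nbhs_filter x)) => e e0.
have Ce0 : 0 < e / (`|C| * n%:R + 1) by rewrite divr_gt0 // ltr_wpDl ?mulr_ge0.
have := @cvgr_dist_lt _ _ _ (nbhs x) (nbhs_filter x) id x (@cvg_id _ (nbhs x)) _ Ce0.
apply: filterS => y xy; apply: le_lt_trans (f_lip x y) _.
apply: le_lt_trans (ler_norm _) _; rewrite normrM.
apply: le_lt_trans (_ : `|C| * (n%:R * `|x - y|) < e).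
  by rewrite ler_wpM2l // ger0_norm ?enorm_ge0 // enorm_le_normr.
rewrite mulrA; apply: le_lt_trans (_ : (`|C| * n%:R + 1) * `|x - y| < e).
  by rewrite ler_wpM2r // lerDl.
by rewrite mulrC -ltr_pdivlMr // ltr_wpDl ?mulr_ge0.
Qed.

End Euclid.

Section Projection.
Variables (R : realType) (n : nat).
Local Notation vec := 'rV[R]_n.
Implicit Types (S : set vec) (x y z : vec).

Lemma enorm_continuous : continuous (@enorm R n).
Proof.
apply: (@lipschitz_continuous _ _ _ 1) => x y; rewrite mul1r ler_norml.
have := enormD (x - y) y; have := enormD (y - x) x.
by rewrite !subrK (enormB y); lra.
Qed.

Definition nearest S x p := S p /\ forall q, S q -> enorm (x - p) <= enorm (x - q).

Lemma exists_nearest S x : S !=set0 -> closed S -> exists p, nearest S x p.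
Proof.
move=> [x0 Sx0] clS.
have gap_cont : continuous (fun q : vec => enorm (x - q)).
  move=> q; apply: continuous_comp; last exact: enorm_continuous.
  exact: (continuousB (@cst_continuous _ _ _ _) (@cvg_id _ _)).
set K := S `&` [set q | enorm (x - q) <= enorm (x - x0)].
have cK : compact K.
  apply: bounded_closed_compact.
    exists (`|x| + enorm (x - x0)); split; first exact: num_real.
    move=> M xM q [_ xq]; apply: le_trans (ltW xM).
    rewrite -[q](subKr x); apply: le_trans (ler_normB _ _) _.
    by rewrite lerD2l; apply: le_trans (normr_le_enorm _) xq.
  apply: closedI => //.
  apply: (@preimage_closed _ _ _ [set r : R | r <= enorm (x - x0)]); last exact: closed_le.
  by move=> q _; apply: gap_cont.
have [p pK pmin] : exists2 p, p \in K & forall q, q \in K -> enorm (x - p) <= enorm (x - q).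
  apply: compact_EVT_min => //; first by exists x0; split => /=.
  by move=> q; apply: continuous_subspaceT => r; apply: gap_cont.
move: pK; rewrite inE => -[Sp xp]; exists p; split => // q Sq.
have [xq|/ltW xq] := leP (enorm (x - q)) (enorm (x - x0)); first by apply: pmin; rewrite inE.
exact: le_trans xp xq.
Qed.

Lemma projS_nearest S x : S !=set0 -> closed S -> nearest S x (projS S x).
Proof. by move=> S0 clS; apply: xgetPex; apply: exists_nearest. Qed.

Lemma dist0 S x : S x -> dist S x = 0.
Proof.
move=> Sx; rewrite /dist /projS.
set P := [set p | S p /\ _].
have [[p Pp]|nP] := pselect (exists p, P p).
  have [_ /(_ x Sx)] := xgetPex x (ex_intro _ p Pp).
  by rewrite subrr enorm0 => x0; apply/eqP; rewrite eq_le x0 enorm_ge0.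
by rewrite xgetPN ?subrr ?enorm0 // => q Pq; apply: nP; exists q.
Qed.

Lemma sub_cball S r : 0 <= r -> S `<=` cball r S.
Proof. by move=> r0 a Sa; rewrite /cball /= dist0. Qed.

Lemma dist_le_enorm S x q : S !=set0 -> closed S -> S q -> dist S x <= enorm (x - q).
Proof. by move=> S0 clS Sq; have [_] := projS_nearest x S0 clS; apply. Qed.

Lemma dist_leD S x y : S !=set0 -> closed S -> dist S x <= enorm (x - y) + dist S y.
Proof.
move=> S0 clS; have [Sp _] := projS_nearest y S0 clS.
apply: le_trans (dist_le_enorm x S0 clS Sp) _.
have -> : x - projS S y = (x - y) + (y - projS S y) by rewrite addrA subrK.
exact: enormD.
Qed.

Lemma dist_continuous S : S !=set0 -> closed S -> continuous (dist S).
Proof.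
move=> S0 clS; apply: (@lipschitz_continuous _ _ _ 1) => x y.
rewrite mul1r ler_norml; have := dist_leD y x S0 clS; have := dist_leD x y S0 clS.
by rewrite (enormB y); lra.
Qed.

Lemma projS_setT z : projS (@setT vec) z = z.
Proof.
apply/eqP; rewrite eq_sym -subr_eq0; apply/eqP/enorm_eq0.
by rewrite -/(dist setT z) dist0.
Qed.

End Projection.

Section ConvexProjection.
Variables (R : realType) (n : nat).
Local Notation vec := 'rV[R]_n.
Implicit Types (a d y z : vec).
Variable S : set vec.
Hypotheses (S0 : S !=set0) (clS : closed S) (cvS : convex_set S).

Lemma convex_set_segment a p t : S a -> S p -> 0 <= t <= 1 -> S (p + t *: (a - p)).
Proof.
move=> Sa Sp /andP[t0 t1].
have := @cvS a p (Itv01 t0 t1); rewrite !inE => /(_ Sa Sp).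
by congr S; rewrite /conv /= /unstable.onem scalerBl scale1r scalerBr addrCA.
Qed.

Lemma dotv_le0_of_segment_min (w e : vec) :
  (forall t, 0 < t -> t <= 1 -> dotv w w <= dotv (w - t *: e) (w - t *: e)) ->
  dotv w e <= 0.
Proof.
move=> wmin; set c := dotv w e; set D := dotv e e.
have D0 : 0 <= D by apply: dotv_ge0.
rewrite leNgt; apply/negP => c0.
have cD : 0 < c + D by rewrite ltr_wpDr.
set t := c / (c + D).
have t0 : 0 < t by rewrite divr_gt0.
have t1 : t <= 1 by rewrite ler_pdivrMr // mul1r lerDl.
have := wmin t t0 t1.
rewrite dotvBl !dotvBr !dotvZl !dotvZr (dotvC e) -/c -/D => tmin.
have ctD : 2 * c <= t * D.
  by rewrite -(ler_pM2l t0); lra.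
have : t * D <= c by rewrite /t mulrAC ler_pdivrMr // ler_wpM2l ?ltW //; lra.
lra.
Qed.

Lemma projS_obtuse z a : S a -> dotv (z - projS S z) (a - projS S z) <= 0.
Proof.
move=> Sa; set p := projS S z.
have [Sp pmin] := projS_nearest z S0 clS; rewrite -/p in Sp pmin.
apply: dotv_le0_of_segment_min => t t0 t1.
have := pmin _ (convex_set_segment Sa Sp (introT andP (conj (ltW t0) t1))).
rewrite -(ler_sqr (enorm_ge0 _) (enorm_ge0 _)) !enorm_sqr.
by rewrite opprD addrA.
Qed.

Lemma projS_enorm_le z a : S a -> enorm (projS S z - a) <= enorm (z - a).
Proof.
move=> /(projS_obtuse z).
have -> : z - a = (z - projS S z) - (a - projS S z) by rewrite opprB addrA subrK.
have -> : projS S z - a = - (a - projS S z) by rewrite opprB.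
move: (z - projS S z) (a - projS S z) => w e we.
rewrite -(ler_sqr (enorm_ge0 _) (enorm_ge0 _)) !enorm_sqr.
rewrite dotvNl dotvNr opprK dotvBl !dotvBr (dotvC e w).
by have := dotv_ge0 w; lra.
Qed.

Lemma dotv_projSD_le y d : dotv (projS S (y + d) - projS S y) d <= dotv d d.
Proof.
have [Sp _] := projS_nearest y S0 clS.
have [Sq _] := projS_nearest (y + d) S0 clS.
have := projS_obtuse y Sq; have := projS_obtuse (y + d) Sp.
have -> : y + d - projS S (y + d) = (y - projS S y) + d - (projS S (y + d) - projS S y).
  by rewrite opprB addrA; congr (_ - _); rewrite addrAC subrK.
have -> : projS S y - projS S (y + d) = - (projS S (y + d) - projS S y) by rewrite opprB.
move: (y - projS S y) (projS S (y + d) - projS S y) => u w.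
have := dotv_ge0 (d - w).
rewrite dotvNr !(dotvBl, dotvBr, dotvDl) (dotvC w d); lra.
Qed.

End ConvexProjection.

Definition halfsqdist (R : realType) (n : nat) (A : set 'rV[R]_n) (y : 'rV[R]_n) : R :=
  2^-1 * dist A y ^+ 2.

Section HalfSquaredDistance.
Variables (R : realType) (n : nat).
Local Notation vec := 'rV[R]_n.
Implicit Types (d y : vec).
Variable A : set vec.
Hypotheses (A0 : A !=set0) (clA : closed A) (cvA : convex_set A).

Lemma halfsqdist_expansion y d :
  `|halfsqdist A (y + d) - halfsqdist A y - dotv (y - projS A y) d| <= 2^-1 * dotv d d.
Proof.
have [AP Pmin] := projS_nearest y A0 clA.
have [AQ Qmin] := projS_nearest (y + d) A0 clA.
have := dotv_projSD_le A0 clA cvA y d.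
have := Qmin _ AP; have := Pmin _ AQ.
rewrite -!(ler_sqr (enorm_ge0 _) (enorm_ge0 _)) /halfsqdist /dist !enorm_sqr.
have -> : y + d - projS A (y + d) = (y - projS A y) + d - (projS A (y + d) - projS A y).
  by rewrite opprB addrA; congr (_ - _); rewrite addrAC subrK.
have -> : y + d - projS A y = (y - projS A y) + d by rewrite addrAC.
have -> : y - projS A (y + d) = (y - projS A y) - (projS A (y + d) - projS A y).
  by rewrite opprB addrA subrK.
move: (y - projS A y) (projS A (y + d) - projS A y) => u w.
rewrite !(dotvBl, dotvBr, dotvDl, dotvDr) (dotvC w u) (dotvC d u) (dotvC d w).
by move=> h1 h2 h3; rewrite ler_norml; apply/andP; split; lra.
Qed.

Lemma grad_halfsqdist y : grad (halfsqdist A) y = y - projS A y.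
Proof.
apply/rowP => i; rewrite mxE.
set c := (y - projS A y) ord0 i; set e : vec := delta_mx ord0 i.
have ee : dotv e e = 1 by rewrite /e dotv_delta mxE !eqxx.
apply: cvg_lim => //.
apply/(@cvgrPdist_le _ _ _ _ (dnbhs_filter 0)) => eps eps0.
have eps2 : 0 < 2 * eps by rewrite mulr_gt0.
near=> h.
have h0 : h != 0 by near: h; exact: nbhs_dnbhs_neq.
have h_small : `|h| < 2 * eps by near: h; exact: dnbhs0_lt.
have := halfsqdist_expansion y (h *: e).
rewrite dotvZl !dotvZr ee dotv_delta mulr1 (addrC y) -/c => expansion.
have -> : c - h^-1 *: (halfsqdist A (h *: e + y) - halfsqdist A y)
    = - h^-1 * (halfsqdist A (h *: e + y) - halfsqdist A y - h * c).
  by rewrite /GRing.scale /=; field.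
rewrite normrM normrN normfV ler_pdivrMl ?normr_gt0 //.
apply: le_trans expansion _.
have -> : h * h = `|h| * `|h| by rewrite -normrM ger0_norm // -expr2 sqr_ge0.
have : `|h| * `|h| <= `|h| * (2 * eps) by rewrite ler_wpM2l // ltW.
by rewrite mulrCA; lra.
Unshelve. all: by end_near.
Qed.

Lemma halfsqdist_continuous : continuous (halfsqdist A).
Proof.
move=> x.
apply: (@continuousM _ _ (cst 2^-1) (fun y => dist A y ^+ 2)); first exact: cst_continuous.
have dist_x : {for x, continuous (dist A)} by apply: dist_continuous.
exact: continuous_comp dist_x (@exprn_continuous R 2 (dist A x)).
Qed.

Lemma halfsqdist_rad_unb (Xi : set vec) : rad_unb_on A Xi (halfsqdist A).
Proof.
move=> B; exists (2 * `|B| + 1); split; first by have := normr_ge0 B; lra.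
move=> x _ /negP; rewrite /cball /= -ltNge => Ax.
have d_le_sqr : dist A x <= dist A x ^+ 2.
  by rewrite expr2 ler_peMl ?enorm_ge0 //; have := normr_ge0 B; lra.
rewrite /halfsqdist; have := ler_norm B; have := normr_ge0 B; lra.
Qed.

End HalfSquaredDistance.

Section Calculus.
Variables (R : realType) (n : nat).
Local Notation vec := 'rV[R]_n.
Variable V : vec -> R.

Lemma derive_grad y d : differentiable V y -> 'D_d V y = dotv (grad V y) d.
Proof.
move=> dV.
have d_sum : d = \sum_(i < n) d ord0 i *: delta_mx ord0 i.
  apply/rowP => j; rewrite summxE (bigD1 j) //= big1 ?addr0.
    by rewrite !mxE !eqxx mulr1.
  by move=> k kj; rewrite !mxE [j == k]eq_sym (negbTE kj) andbF mulr0.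
rewrite [in LHS]d_sum deriveE // linear_sum /dotv; apply: eq_bigr => i _.
by rewrite linearZ /= mxE -deriveE // mulrC.
Qed.

Lemma MVT_grad y d : (forall x, differentiable V x) ->
  exists2 c : R, 0 <= c <= 1 & V (y + d) - V y = dotv (grad V (c *: d + y)) d.
Proof.
move=> dV; pose g t := V (t *: d + y).
have g_derive t : is_derive t (1 : R) g ('D_d V (t *: d + y)).
  have g_quot : (fun h : R => h^-1 *: ((g \o shift t) h%:A - g t)) =
           (fun h : R => h^-1 *: ((V \o shift (t *: d + y)) (h *: d) - V (t *: d + y))).
    apply/funext => h; rewrite /= /g; congr (_ *: (V _ - _)).
    have -> : h%:A + t = h + t by rewrite /GRing.scale /= mulr1.
    by rewrite scalerDl addrA.
  by split; rewrite /derivable /derive g_quot //; exact: diff_derivable.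
have g_cont : {within `[0, 1], continuous g}.
  apply: continuous_subspaceT => t.
  apply: continuous_comp; last exact: differentiable_continuous.
  by apply: continuousD; [exact: scalel_continuous | exact: cst_continuous].
have [c c01 mvt] := MVT_segment ler01 (fun t _ => g_derive t) g_cont.
exists c; first by move: c01; rewrite in_itv.
move: mvt; rewrite /g scale1r scale0r add0r subr0 mulr1 (addrC d y) => ->.
exact: derive_grad.
Qed.

End Calculus.

Lemma compact_unif_continuous (R : realType) (U W : normedModType R) (f : U -> W)
    (K : set U) :
  compact K -> continuous f -> forall eta, 0 < eta -> exists2 delta, 0 < delta &
    forall y z, K y -> `|z - y| < delta -> `|f z - f y| < eta.
Proof.
move=> cK cf eta eta0.
pose P (k : nat) (y : U) := forall z, `|z - y| < k.+1%:R^-1 -> `|f z - f y| < eta.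
have : \forall k \near \oo, K `<=` P k.
  apply: (proj1 (compact_near_coveringP K) cK nat \oo P) => x Kx.
  have eta2 : 0 < eta / 2 by rewrite divr_gt0.
  have /nbhs_ballP[r r0 fx_near] :=
    @cvgr_dist_lt _ _ _ (nbhs x) (nbhs_filter x) f (f x) (cf x) _ eta2.
  have r2 : 0 < r / 2 by rewrite divr_gt0.
  have [N N_small] : exists N : nat, N.+1%:R^-1 < r / 2.
    by exists (Num.truncn (r / 2)^-1); rewrite invf_plt ?posrE // truncnS_gt.
  exists ([set x' | `|x - x'| < r / 2], [set k | (N <= k)%N]); first split.
  - exact: (@cvgr_dist_lt _ _ _ (nbhs x) (nbhs_filter x) id x (@cvg_id _ (nbhs x)) _ r2).
  - by exists N.
  move=> [x' k] [/= xx' Nk] z zx'.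
  have xz : `|x - z| < r.
    rewrite -(subrKA x'); apply: le_lt_trans (ler_normD _ _) _.
    have : `|x' - z| < r / 2.
      rewrite distrC; apply: lt_le_trans zx' (le_trans _ (ltW N_small)).
      by rewrite lef_pV2 ?posrE // ler_nat.
    lra.
  have xx'r : `|x - x'| < r by apply: lt_trans xx' _; rewrite ltr_pdivrMr // ltr_pMr // ltr1n.
  have fxz : `|f x - f z| < eta / 2 by apply: fx_near; rewrite -ball_normE.
  have fxx' : `|f x - f x'| < eta / 2 by apply: fx_near; rewrite -ball_normE.
  rewrite -(subrKA (f x)); apply: le_lt_trans (ler_normD _ _) _.
  by rewrite distrC in fxz; lra.
move=> [N _ KPN]; exists N.+1%:R^-1; first by rewrite invr_gt0 ltr0n.
by move=> y z Ky; apply: (KPN N (leqnn N) y Ky).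
Qed.

Section Sublevel.
Variables (R : realType) (n : nat).
Local Notation vec := 'rV[R]_n.
Variable A : set vec.
Hypotheses (A0 : A !=set0) (cA : compact A).

Lemma compact_cball r : compact (cball r A).
Proof.
have clA := compact_closed (@norm_hausdorff _ _) cA.
have [M [_ AM]] := compact_bounded cA.
apply: bounded_closed_compact.
  exists (M + 1 + r); split; first exact: num_real.
  move=> N MN x Ax; apply: le_trans (ltW MN).
  have [AP _] := projS_nearest x A0 clA.
  rewrite -(subrK (projS A x) x) addrC; apply: le_trans (ler_normD _ _) _.
  apply: lerD; first by apply: (AM (M + 1)) => //; rewrite ltrDl.
  exact: le_trans (normr_le_enorm _) Ax.
apply: (@preimage_closed _ _ _ [set t : R | t <= r]); last exact: closed_le.
by move=> q _; apply: dist_continuous.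
Qed.

Lemma continuous_bounded_cball (V : vec -> R) r : continuous V -> 0 <= r ->
  exists Q, forall y, dist A y <= r -> V y <= Q.
Proof.
move=> cV r0.
have [c _ Vc_max] : exists2 c, c \in cball r A & forall t, t \in cball r A -> V t <= V c.
  apply: compact_EVT_max; first by case: A0 => a Aa; exists a; apply: sub_cball.
    exact: compact_cball.
  by move=> q; apply: continuous_subspaceT => z; exact: cV.
by exists (V c) => y Ay; apply: Vc_max; rewrite inE.
Qed.

Lemma rad_unb_on_sublevel (Xi : set vec) (V : vec -> R) B : rad_unb_on A Xi V ->
  exists2 r, 0 < r & forall x, Xi x -> V x <= B -> dist A x <= r.
Proof.
move=> /(_ B) [r [r0 Vfar]]; exists r => // x Xx VB.
by rewrite leNgt; apply/negP => Ax; have := Vfar x Xx; rewrite /cball /= leNgt Ax; lra.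
Qed.

End Sublevel.

Lemma lyapunov_sequence (R : archiRealFieldType) (v : nat -> R) (W Q1 Q2 c : R) :
  0 < c -> Q2 <= W -> (forall t, 0 <= v t) -> v 0%N <= W ->
  (forall t, v t <= W -> Q1 <= v t -> v t.+1 <= v t - c) ->
  (forall t, v t <= W -> v t < Q1 -> v t.+1 <= Q2) ->
  (v 0%N <= Q2 -> forall t, v t <= Q2) /\
  (forall t, ((Num.truncn (W / c)).+1 <= t)%N -> v t <= Q2).
Proof.
move=> c0 Q2W v_ge0 v0W v_decr v_reach.
have v_le_W t : v t <= W.
  elim: t => // t vtW; have [Q1v|vQ1] := leP Q1 (v t).
    by have := v_decr t vtW Q1v; lra.
  by have := v_reach t vtW vQ1; lra.
have v_stays t : v t <= Q2 -> v t.+1 <= Q2.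
  move=> vtQ2; have [Q1v|vQ1] := leP Q1 (v t); last exact: v_reach.
  by have := v_decr t (v_le_W t) Q1v; lra.
split; first by move=> v0Q2; elim.
have v_drops t : v t <= Q2 \/ v t <= W - t%:R * c.
  elim: t => [|t [vtQ2|vtW]]; first by right; rewrite mul0r subr0.
    by left; apply: v_stays.
  have [Q1v|vQ1] := leP Q1 (v t); last by left; apply: v_reach.
  by right; have := v_decr t (v_le_W t) Q1v; rewrite -natr1 mulrDl mul1r; lra.
move=> t Tt; have [//|vtW] := v_drops t.
have : W < t%:R * c.
  by rewrite -ltr_pdivrMr //; apply: lt_le_trans (truncnS_gt _) _; rewrite ler_nat.
by have := v_ge0 t; lra.
Qed.

Definition step_descent (R : realType) (n : nat) (A Xi : set 'rV[R]_n)
    (V g : 'rV[R]_n -> R) (s : 'rV[R]_n -> 'rV[R]_n) : Prop :=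
  forall r eta : R, 0 < r -> 0 < eta -> exists2 a0, 0 < a0 &
    forall alpha y, 0 < alpha -> alpha <= a0 -> Xi y -> dist A y <= r ->
      V (projS Xi (y - alpha *: s y)) <= V y - alpha * g y + alpha * eta.

Section PracticalDescent.
Variables (R : realType) (n : nat).
Local Notation vec := 'rV[R]_n.
Variables (A Xi : set vec) (V g : vec -> R) (s : vec -> vec) (eps b : R).
Hypotheses (A0 : A !=set0) (cA : compact A) (clXi : closed Xi).
Hypotheses (V_ge0 : forall y, 0 <= V y) (cV : continuous V) (radV : rad_unb_on A Xi V).
Hypothesis Xi_step : forall alpha y, 0 < alpha -> Xi y -> Xi (projS Xi (y - alpha *: s y)).
Hypothesis V_descent : step_descent A Xi V g s.
Hypotheses (eps_ge0 : 0 <= eps) (b_ge0 : 0 <= b).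
Hypothesis g_ge_near : forall y, Xi y -> dist A y <= eps -> - b <= g y.
Hypothesis g_ge_phi : forall sigma, eps < sigma -> exists phi : vec -> R, continuous phi /\
  forall y, Xi y -> dist A y <= sigma -> ~ dist A y < eps -> 0 < phi y /\ phi y <= g y.

Lemma g_ge_Nb y : Xi y -> - b <= g y.
Proof.
move=> Xy; have [Ay|Ay] := leP (dist A y) eps; first exact: g_ge_near.
have [phi [_ phi_g]] := g_ge_phi Ay.
have [|phi_gt0 phi_le] := phi_g y Xy (lexx _).
  by apply/negP; rewrite -leNgt ltW.
by rewrite (le_trans _ phi_le) // (le_trans _ (ltW phi_gt0)) // oppr_le0.
Qed.

Lemma g_ge_min r Q : (forall y, Xi y -> Q <= V y -> eps < dist A y) ->
  exists2 m, 0 < m & forall y, Xi y -> dist A y <= r -> Q <= V y -> m <= g y.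
Proof.
move=> V_far.
have r_le : r <= Num.max r eps by rewrite le_max lexx.
have eps_le : eps <= Num.max r eps by rewrite le_max lexx orbT.
have eps_lt : eps < Num.max r eps + 1 by lra.
have [phi [cphi phi_g]] := g_ge_phi eps_lt.
set K := cball r A `&` (Xi `&` [set y | Q <= V y]).
have cK : compact K.
  apply: compact_closedI; first exact: compact_cball.
  apply: closedI => //.
  apply: (@preimage_closed _ _ _ [set t : R | Q <= t]); last exact: closed_ge.
  by move=> q _; apply: cV.
have phi_K y : K y -> 0 < phi y /\ phi y <= g y.
  move=> [Ay [Xy Vy]]; apply: phi_g => //.
    by apply: le_trans Ay _; lra.
  by have := V_far y Xy Vy; lra.
have [[y0 Ky0]|K0] := pselect (K !=set0); last first.
  by exists 1 => // y Xy Ay Vy; exfalso; apply: K0; exists y.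
have [c Kc phi_min] : exists2 c, c \in K & forall t, t \in K -> phi c <= phi t.
  apply: compact_EVT_min => //; first by exists y0.
  by move=> q; apply: continuous_subspaceT => z; apply: cphi.
move: Kc; rewrite inE => Kc; exists (phi c); first by case: (phi_K c Kc).
move=> y Xy Ay Vy; have Ky : K y by [].
by apply: le_trans (proj2 (phi_K y Ky)); apply: phi_min; rewrite inE.
Qed.

Lemma step_decrease r Q : 0 < r -> (forall y, Xi y -> Q <= V y -> eps < dist A y) ->
  exists2 alpha, 0 < alpha & exists2 c, 0 < c & forall y, Xi y -> dist A y <= r ->
    (Q <= V y -> V (projS Xi (y - alpha *: s y)) <= V y - c) /\
    (V y < Q -> V (projS Xi (y - alpha *: s y)) <= Q + 1).
Proof.
move=> r0 V_far; have [m m0 g_ge_m] := g_ge_min r V_far.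
have m20 : 0 < m / 2 by rewrite divr_gt0.
have [a0 a00 descent] := V_descent r0 m20.
have bm0 : 0 < b + m / 2 by rewrite ltr_wpDl.
(* Small enough for the descent estimate with error [m / 2], and such that a step
   taken below the level [Q] raises [V] by at most [alpha * (b + m / 2) <= 1]. *)
set alpha := Num.min a0 (b + m / 2)^-1.
have alpha0 : 0 < alpha by rewrite lt_min a00 invr_gt0.
have alpha_a0 : alpha <= a0 by rewrite ge_min lexx.
have alpha_bm : alpha * (b + m / 2) <= 1 by rewrite -ler_pdivlMr // div1r ge_min lexx orbT.
exists alpha => //; exists (alpha * (m / 2)); first exact: mulr_gt0.
move=> y Xy Ay; have := descent alpha y alpha0 alpha_a0 Xy Ay.
split => [QV|VQ].
  have : alpha * m <= alpha * g y by rewrite ler_pM2l // g_ge_m.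
  have : alpha * m = alpha * (m / 2) + alpha * (m / 2) by rewrite -mulrDr -splitr.
  lra.
have : alpha * (- b) <= alpha * g y by rewrite ler_pM2l // g_ge_Nb.
by move: alpha_bm; rewrite mulrDr mulrN; lra.
Qed.

Lemma trajectory_in alpha y : 0 < alpha -> trajectory Xi s alpha y -> forall t, Xi (y t).
Proof. by move=> alpha0 [Xy0 y_next]; elim=> // t Xyt; rewrite y_next; apply: Xi_step. Qed.

Lemma practical_convergence Q sigma : 0 <= sigma ->
  (forall y, dist A y <= eps + 1 -> V y <= Q) ->
  exists2 alpha, 0 < alpha & exists T : nat, forall y, trajectory Xi s alpha y ->
    dist A (y 0%N) <= sigma ->
    (V (y 0%N) <= Q + 2 -> forall t, V (y t) <= Q + 2) /\
    (forall t, (T <= t)%N -> V (y t) <= Q + 2).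
Proof.
move=> sigma0 V_le_Q.
have [W0 V_le_W0] := continuous_bounded_cball A0 cA cV sigma0.
set W := Num.max W0 (Q + 2).
have W0_le : W0 <= W by rewrite le_max lexx.
have Q2_le : Q + 2 <= W by rewrite le_max lexx orbT.
have [r r0 V_le_W] := rad_unb_on_sublevel W radV.
have V_far y : Xi y -> Q + 1 <= V y -> eps < dist A y.
  move=> _ QV; rewrite ltNge; apply/negP => Ay.
  have : dist A y <= eps + 1 by lra.
  by move/V_le_Q; lra.
have [alpha alpha0 [c c0 step]] := step_decrease r0 V_far.
exists alpha => //; exists (Num.truncn (W / c)).+1 => y traj Ay0.
have Xy := trajectory_in alpha0 traj; have [_ y_next] := traj.
have step_at t : V (y t) <= W -> (Q + 1 <= V (y t) -> V (y t.+1) <= V (y t) - c) /\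
    (V (y t) < Q + 1 -> V (y t.+1) <= Q + 2).
  move=> VW; rewrite y_next; have [decr reach] := step _ (Xy t) (V_le_W _ (Xy t) VW).
  by split => // VQ; have := reach VQ; lra.
exact: (@lyapunov_sequence _ (V \o y) W (Q + 1) (Q + 2) c c0 Q2_le (fun t => V_ge0 _)
  (le_trans (V_le_W0 _ Ay0) W0_le) (fun t VW => proj1 (step_at t VW))
  (fun t VW => proj2 (step_at t VW))).
Qed.

Lemma spas_of_descent : SPAS A Xi s.
Proof.
have eps1_ge0 : 0 <= eps + 1 by have := eps_ge0; lra.
have [Q V_le_Q] := continuous_bounded_cball A0 cA cV eps1_ge0.
have [r r0 Ar] := rad_unb_on_sublevel (Q + 2) radV.
have r_pos : 0 < r + eps + 1 by have := eps_ge0; lra.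
split.
  exists (r + eps + 1); split => // rho rho_gt; exists (eps + 1).
  split; first by have := eps_ge0; lra.
  have [alpha alpha0 [T conv]] := practical_convergence eps1_ge0 V_le_Q.
  exists [set alpha]; split; [by exists alpha | split; first by move=> a ->].
  move=> a y -> traj Ay0 t; have Xy := trajectory_in alpha0 traj.
  have [stay _] := conv y traj Ay0.
  have V0 : V (y 0%N) <= Q + 2 by have := V_le_Q _ Ay0; lra.
  by split => //; have := Ar _ (Xy t) (stay V0 t); rewrite /cball /=; lra.
exists (r + eps + 1); split => // sigma rho rho_gt sigma_gt.
have sigma0 : 0 <= sigma by lra.
have [alpha alpha0 [T conv]] := practical_convergence sigma0 V_le_Q.
exists [set alpha]; split; [by exists alpha | split; first by move=> a ->].
move=> a -> e e0 _; exists T => y traj Ay0 t Tt.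
have [_ reach] := conv y traj Ay0.
have Ayt : cball rho A (y t).
  by have := Ar _ (trajectory_in alpha0 traj t) (reach t Tt); rewrite /cball /=; lra.
by rewrite /cball /= dist0 // ltW.
Qed.

End PracticalDescent.

Definition bounded_near (R : realType) (n : nat) (A Xi : set 'rV[R]_n)
    (s : 'rV[R]_n -> 'rV[R]_n) : Prop :=
  forall r : R, 0 < r -> exists2 M, 0 <= M & forall y, Xi y -> dist A y <= r -> enorm (s y) <= M.

Section Descent.
Variables (R : realType) (n : nat).
Local Notation vec := 'rV[R]_n.
Variables (A Xi : set vec) (s : vec -> vec).
Hypotheses (A0 : A !=set0) (cA : compact A).

Lemma lipschitz_bounded_near : A `<=` Xi ->
  (forall r : R, 0 < r -> exists L : R, 0 < L /\
     forall y1 y2, Xi y1 -> cball r A y1 -> Xi y2 -> cball r A y2 ->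
       enorm (s y1 - s y2) <= L * enorm (y1 - y2)) ->
  bounded_near A Xi s.
Proof.
move=> AXi s_lip r r0; have [a Aa] := A0.
have clA := compact_closed (@norm_hausdorff _ _) cA.
have [L [L0 sL]] := s_lip r r0.
have [D [_ AD]] := compact_bounded cA.
have AD1 b : A b -> `|b| <= D + 1 by move=> Ab; apply: (AD (D + 1)) => //; rewrite ltrDl.
have D0 : 0 <= D + 1 by apply: le_trans (AD1 a Aa).
exists (enorm (s a) + L * (r + n%:R * (D + 1 + (D + 1)))).
  apply: addr_ge0; first exact: enorm_ge0.
  apply: mulr_ge0; first exact: ltW.
  by apply: addr_ge0; [exact: ltW | apply: mulr_ge0; [exact: ler0n | exact: addr_ge0]].
move=> y Xy Ay.
have ya : enorm (y - a) <= r + n%:R * (D + 1 + (D + 1)).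
  have [AP _] := projS_nearest y A0 clA.
  have -> : y - a = (y - projS A y) + (projS A y - a) by rewrite addrA subrK.
  apply: le_trans (enormD _ _) (lerD Ay _); apply: le_trans (enorm_le_normr _) _.
  by rewrite ler_wpM2l // (le_trans (ler_normB _ _)) // lerD ?AD1.
have := sL y a Xy Ay (AXi _ Aa) (sub_cball (ltW r0) Aa).
have := enormD (s a) (s y - s a); rewrite addrC subrK addrC.
have : L * enorm (y - a) <= L * (r + n%:R * (D + 1 + (D + 1))) by rewrite ler_pM2l.
lra.
Qed.

Lemma dist_projS_le z : A `<=` Xi -> Xi !=set0 -> closed Xi -> convex_set Xi ->
  dist A (projS Xi z) <= dist A z.
Proof.
move=> AXi Xi0 clXi cvXi; have clA := compact_closed (@norm_hausdorff _ _) cA.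
have [Az _] := projS_nearest z A0 clA.
apply: le_trans (dist_le_enorm _ A0 clA Az) _.
exact: projS_enorm_le Xi0 clXi cvXi _ _ (AXi _ Az).
Qed.

Lemma step_descent_halfsqdist : A `<=` Xi -> Xi !=set0 -> closed Xi -> convex_set Xi ->
  convex_set A -> bounded_near A Xi s ->
  step_descent A Xi (halfsqdist A) (fun y => dotv (grad (halfsqdist A) y) (s y)) s.
Proof.
move=> AXi Xi0 clXi cvXi cvA s_bnd r eta r0 eta0.
have clA := compact_closed (@norm_hausdorff _ _) cA.
have [M M0 sM] := s_bnd r r0.
have M1 : 0 < M ^+ 2 + 1 by rewrite ltr_wpDl ?sqr_ge0.
exists (2 * eta / (M ^+ 2 + 1)); first by rewrite divr_gt0 ?mulr_gt0.
move=> alpha y alpha0 alpha_le Xy Ay; rewrite grad_halfsqdist //.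
set z := y - alpha *: s y.
have proj_le : halfsqdist A (projS Xi z) <= halfsqdist A z.
  rewrite ler_pM2l ?invr_gt0 ?ltr0n // ler_sqr ?nnegrE ?enorm_ge0 //.
  exact: dist_projS_le.
have := halfsqdist_expansion A0 clA cvA y (- (alpha *: s y)).
rewrite -/z dotvNl dotvNr opprK dotvNr !dotvZl !dotvZr ler_norml => /andP[_ expansion].
have ss : dotv (s y) (s y) <= M ^+ 2.
  by rewrite -enorm_sqr lerXn2r ?nnegrE ?enorm_ge0 ?sM.
have alpha_ss : alpha * dotv (s y) (s y) <= 2 * eta.
  rewrite ler_pdivlMr // in alpha_le; apply: le_trans _ alpha_le.
  by rewrite ler_pM2l // (le_trans ss) // lerDl.
have := ler_wpM2l (ltW alpha0) alpha_ss.
lra.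
Qed.

Lemma step_descent_C1 (V : vec -> R) : (forall y, differentiable V y) -> continuous (grad V) ->
  bounded_near A setT s -> step_descent A setT V (fun y => dotv (grad V y) (s y)) s.
Proof.
move=> dV cgrad s_bnd r eta r0 eta0.
have [M M0 sM] := s_bnd r r0.
have nM0 : 0 < n%:R * M + 1 by rewrite ltr_wpDl // mulr_ge0.
set eta' := eta / (n%:R * M + 1).
have eta'0 : 0 < eta' by rewrite divr_gt0.
have [de de0 grad_near] := compact_unif_continuous (compact_cball A0 cA (r := r)) cgrad eta'0.
have M10 : 0 < M + 1 by rewrite ltr_wpDl.
exists (de / (M + 1)); first by rewrite divr_gt0.
move=> alpha y alpha0 alpha_le _ Ay; rewrite projS_setT.
have [c /andP[c0 c1] mvt] := MVT_grad y (- (alpha *: s y)) dV.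
have sy : `|s y| <= M by apply: le_trans (normr_le_enorm _) (sM _ I Ay).
have xi_near : `|c *: - (alpha *: s y) + y - y| < de.
  rewrite addrK normrZ normrN normrZ (ger0_norm c0) (gtr0_norm alpha0).
  apply: le_lt_trans (_ : 1 * (alpha * M) < de).
    by apply: ler_pM => //; [exact: mulr_ge0 (ltW alpha0) (normr_ge0 _) | rewrite ler_pM2l].
  rewrite mul1r; apply: le_lt_trans (_ : de / (M + 1) * M < de).
    by rewrite ler_wpM2r.
  by rewrite mulrAC ltr_pdivrMr // ltr_pM2l // ltrDl.
move: (grad_near y _ Ay xi_near) mvt; set xi := c *: _ + y => grad_xi.
rewrite dotvNr dotvZr -[grad V xi](subrK (grad V y)) dotvDl.
have err : `|dotv (grad V xi - grad V y) (s y)| <= eta.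
  apply: le_trans (norm_dotv_le _ _) _.
  apply: le_trans (_ : n%:R * (eta' * M) <= _).
    by apply: ler_wpM2l => //; apply: ler_pM => //; exact: ltW.
  have -> : n%:R * (eta' * M) = eta * (n%:R * M / (n%:R * M + 1)).
    by rewrite /eta'; field; rewrite gt_eqF.
  by rewrite ger_pMr // ler_pdivrMr // mul1r lerDl.
move: err; rewrite ler_norml => /andP[err_lo _].
have := ler_wpM2l (ltW alpha0) err_lo.
rewrite mulrN; lra.
Qed.

End Descent.

Section Settings.
Variables (R : realType) (n : nat).
Local Notation vec := 'rV[R]_n.
Variables (A Xi : set vec).

Lemma strictly_contains_sub : strictly_contains Xi A -> A `<=` Xi.
Proof. by move=> XiA a /XiA [r [r0]]; apply; rewrite subrr enorm0. Qed.

Lemma SPSP_singleton (V : vec -> R) (Psi : vec -> set vec) (s : vec -> vec) :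
  SPSP A Xi V Psi -> (forall y, Xi y -> Psi y = [set s y]) ->
  let g y := dotv (grad V y) (s y) in
  exists eps b : R, [/\ 0 <= eps, 0 <= b,
    forall y, Xi y -> dist A y <= eps -> - b <= g y &
    forall sigma, eps < sigma -> exists phi : vec -> R, continuous phi /\
      forall y, Xi y -> dist A y <= sigma -> ~ dist A y < eps -> 0 < phi y /\ phi y <= g y].
Proof.
move=> [_ [eps [b [eps0 [b0 [g_near g_far]]]]]] Psi_s g; exists eps, b; split => //.
  by move=> y Xy Ay; apply: g_near => //; rewrite Psi_s.
move=> sigma eps_sigma; have [phi [cphi [phi_gt0 [_ phi_le]]]] := g_far sigma eps_sigma.
exists phi; split => // y Xy Ay Ay'; split; first exact: phi_gt0.
by apply: phi_le => //; rewrite Psi_s.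
Qed.

End Settings.

Unset Implicit Arguments. Set Strict Implicit.

Theorem theorem3 (R : realType) (n : nat) (A Xi : set 'rV[R]_n)
    (V : 'rV[R]_n -> R) (Psi : 'rV[R]_n -> set 'rV[R]_n)
    (s : 'rV[R]_n -> 'rV[R]_n) :
  A !=set0 -> compact A -> (forall y, 0 <= V y) ->
  ((Xi !=set0 /\ closed Xi /\ convex_set Xi /\ convex_set A /\
      V = (fun y => 2^-1 * enorm (y - projS A y) ^+ 2))
   \/
   (Xi = setT /\ C1_loc_lip_grad V /\ pos_def A V /\ rad_unb A V)) ->
  SPSP A Xi V Psi ->
  (forall y, Xi y -> Psi y = [set s y]) ->
  (forall sigma : R, 0 < sigma -> exists L : R, 0 < L /\
     forall y1 y2, Xi y1 -> cball sigma A y1 -> Xi y2 -> cball sigma A y2 ->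
       enorm (s y1 - s y2) <= L * enorm (y1 - y2)) ->
  SPAS A Xi s.
Proof.
move=> A0 cA V_ge0 setting V_SPSP Psi_s s_lip.
have AXi := strictly_contains_sub (proj1 V_SPSP).
have s_bnd := lipschitz_bounded_near A0 cA AXi s_lip.
have [eps [b [eps0 b0 g_near g_far]]] := SPSP_singleton V_SPSP Psi_s.
case: setting => [[Xi0 [clXi [cvXi [cvA eV]]]] | [eXi [[dV [cgrad _]] [_ radV]]]]; subst.
  have clA := compact_closed (@norm_hausdorff _ _) cA.
  apply: (spas_of_descent A0 cA clXi V_ge0 (halfsqdist_continuous A0 clA)
    (halfsqdist_rad_unb _ _) _ (step_descent_halfsqdist A0 cA AXi Xi0 clXi cvXi cvA s_bnd)
    eps0 b0 g_near g_far).
  by move=> alpha y _ _; have [] := projS_nearest (y - alpha *: s y) Xi0 clXi.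
apply: (spas_of_descent A0 cA closedT V_ge0 _ radV _ (step_descent_C1 A0 cA dV cgrad s_bnd)
  eps0 b0 g_near g_far) => // x.
exact: differentiable_continuous.
Qed.
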